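(* Let $\mathcal T=(T,\lambda)$ be a temporal oriented tree and let $u,v,w,x$ be pairwise distinct vertices of $T$ such that there is at least one temporal path from $u$ to $v$, at least one temporal path from $w$ to $x$, and every temporal path from $u$ to $v$ has a vertex in common with every temporal path from $w$ to $x$. Then there is a temporal path from $u$ to $x$ or a temporal path from $w$ to $v$.
   Context: A temporal digraph is a pair $(D,\lambda)$ with $D=(V,A)$ a finite digraph and $\lambda:A\to 2^{\{1,\dots,t_{\max}\}}$ giving the time-steps at which each arc is active. A temporal oriented tree $\mathcal T=(T,\lambda)$ is one whose underlying digraph $T$ is an orientation of a tree. A temporal path from $v_1$ to $v_k$ is a sequence $(v_1,v_2,t_1),\dots,(v_{k-1},v_k,t_{k-1})$ with pairwise distinct $v_i$, $\overrightarrow{v_iv_{i+1}}\in A$, $t_i\in\lambda(\overrightarrow{v_iv_{i+1}})$ and $t_1<\dots<t_{k-1}$ (strictly increasing). *)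

From mathcomp Require Import all_boot.
Set Implicit Arguments. Unset Strict Implicit. Unset Printing Implicit Defensive.

(* A time labelling lam assigns to each arc a set of
   time-steps (as a predicate on nat); only its values on arcs matter. *)

Definition temporal_labelling (V : finType) (tmax : nat) (lam : V -> V -> pred nat) :=
  forall x y t, lam x y t -> (1 <= t <= tmax).

Definition und_adj (V : finType) (A : rel V) : rel V := fun x y => A x y || A y x.

Definition oriented_tree (V : finType) (A : rel V) :=
  [/\ (forall x, ~~ A x x),
      (forall x y, A x y -> ~~ A y x),
      (forall x y, connect (und_adj A) x y) &
      (forall s : seq V, uniq s -> 2 < size s -> ~~ cycle (und_adj A) s)].

(* A temporal path from u to v is encoded as the sequence
   p = [:: (v2,t1); (v3,t2); ...; (vk,t_{k-1})] with v1 = u, standing for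
   (v1,v2,t1), ..., (v_{k-1},v_k,t_{k-1}). *)
Definition tpath_verts (V : finType) (u : V) (p : seq (V * nat)) : seq V :=
  u :: map fst p.

Definition temporal_path (V : finType) (A : rel V) (lam : V -> V -> pred nat)
    (u v : V) (p : seq (V * nat)) : bool :=
  [&& uniq (tpath_verts u p),
      last u (map fst p) == v,
      path (fun a b : V * nat => A a.1 b.1 && lam a.1 b.1 b.2) (u, 0) p &
      sorted ltn (map snd p)].

From mathcomp Require Import all_boot.
Set Implicit Arguments.
Unset Strict Implicit.

(* Cut a temporal u-v path and a temporal w-x path at a common vertex c.  If
   some time of the u-c part is at least some time of the c-x part, then every
   time of the w-c part is smaller than every time of the c-v part, since
   times strictly increase along both paths.  So one of the walks u-c-x or
   w-c-v has increasing times, and removing its loops leaves a temporal path. *)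

Lemma allrel_ltn_exchange (s1 s2 t1 t2 : seq nat) :
  allrel ltn s1 s2 -> allrel ltn t1 t2 ->
  ~~ allrel ltn s1 t2 -> allrel ltn t1 s2.
Proof.
move=> lt_s lt_t not_lt_st; apply/allrelP => a b t1a s2b.
change (a < b); rewrite ltnNge; apply: contra not_lt_st => le_ba.
apply/allrelP => c d s1c t2d.
exact: ltn_trans (allrelP lt_s c b s1c s2b) (leq_ltn_trans le_ba (allrelP lt_t a d t1a t2d)).
Qed.

Section TemporalWalks.
Variables (V : finType) (A : rel V) (lam : V -> V -> pred nat).

Let tstep (a b : V * nat) := A a.1 b.1 && lam a.1 b.1 b.2.

Definition temporal_walk (u v : V) (p : seq (V * nat)) :=
  [&& last u (map fst p) == v, path tstep (u, 0) p & pairwise ltn (map snd p)].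

Lemma tstep_path_fst a p : path tstep a p = path tstep (a.1, 0) p.
Proof. by case: p. Qed.

Lemma temporal_walk_nil u v : temporal_walk u v [::] = (u == v).
Proof. by rewrite /temporal_walk /= andbT. Qed.

Lemma temporal_walk_cons u v b p : temporal_walk u v (b :: p) =
  [&& tstep (u, 0) b, temporal_walk b.1 v p & all (ltn b.2) (map snd p)].
Proof.
rewrite /temporal_walk map_cons last_cons map_cons pairwise_cons /= -tstep_path_fst.
by case: (tstep _ b); case: (_ == v); case: (path _ _ p); case: (all _ _); case: (pairwise _ _).
Qed.

Lemma temporal_pathE u v p :
  temporal_path A lam u v p = uniq (tpath_verts u p) && temporal_walk u v p.
Proof. by rewrite /temporal_path /temporal_walk sorted_pairwise //; exact: ltn_trans. Qed.

Lemma temporal_walk_split u v c p :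
  temporal_walk u v p -> c \in tpath_verts u p ->
  exists p1 p2, [/\ p = p1 ++ p2, temporal_walk u c p1, temporal_walk c v p2
                  & allrel ltn (map snd p1) (map snd p2)].
Proof.
elim: p u => [|b p IH] u.
  rewrite inE => uv /eqP->; exists [::], [::].
  by split=> //; rewrite temporal_walk_nil eqxx.
have [-> walk_cp _|c_neq_u] := eqVneq c u.
  by exists [::], (b :: p); split=> //; rewrite temporal_walk_nil.
rewrite temporal_walk_cons inE (negbTE c_neq_u) /= => /and3P[ub walk_bp lt_b] c_in.
have [p1 [p2 [def_p walk1 walk2 lt12]]] := IH _ walk_bp c_in.
exists (b :: p1), p2; move: lt_b; rewrite def_p map_cat all_cat => /andP[lt_b1 lt_b2].
split=> //; first by rewrite temporal_walk_cons ub walk1.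
by rewrite /= allrel_consl lt_b2 lt12.
Qed.

Lemma temporal_walk_cat u c v p1 p2 :
  temporal_walk u c p1 -> temporal_walk c v p2 ->
  allrel ltn (map snd p1) (map snd p2) -> temporal_walk u v (p1 ++ p2).
Proof.
move=> /and3P[/eqP last1 path1 lt1] /and3P[/eqP last2 path2 lt2] lt12.
rewrite /temporal_walk map_cat last_cat last1 last2 eqxx cat_path path1 /=.
by rewrite tstep_path_fst -(last_map fst) last1 path2 map_cat pairwise_cat lt12 lt1.
Qed.

Lemma temporal_path_suffix y v q z : temporal_path A lam y v q ->
  z \in tpath_verts y q -> exists2 q', temporal_path A lam z v q' & {subset q' <= q}.
Proof.
elim: q y => [|b q IH] y path_yq; first by rewrite inE => /eqP->; exists [::].
have [->|z_neq_y] := eqVneq z y; first by exists (b :: q).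
rewrite inE (negbTE z_neq_y) /= => z_in.
have path_bq : temporal_path A lam b.1 v q.
  move: path_yq; rewrite !temporal_pathE temporal_walk_cons.
  by case/andP=> /= /andP[_ ->] /and3P[_ -> _].
have [q' path_zq' sub] := IH _ path_bq z_in.
by exists q' => // e /sub e_in; rewrite inE e_in orbT.
Qed.

Lemma temporal_walk_to_path u v p : temporal_walk u v p ->
  exists2 p', temporal_path A lam u v p' & {subset p' <= p}.
Proof.
elim: p u => [|b p IH] u; first by exists [::]; rewrite ?temporal_pathE.
rewrite temporal_walk_cons => /and3P[ub walk_bp lt_b].
have [p' path_bp' sub] := IH _ walk_bp.
have [u_in|u_notin] := boolP (u \in tpath_verts b.1 p').
  have [q' path_uq' sub'] := temporal_path_suffix path_bp' u_in.
  by exists q' => // e /sub' /sub e_in; rewrite inE e_in orbT.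
exists (b :: p'); last by move=> e; rewrite !inE => /orP[->|/sub ->]; rewrite ?orbT.
move: path_bp'; rewrite !temporal_pathE temporal_walk_cons => /andP[uniq_p' ->].
rewrite -[tpath_verts u _]/(u :: tpath_verts b.1 p') cons_uniq u_notin uniq_p' ub /=.
by apply/allP => t /mapP[e /sub e_in ->]; apply: (allP lt_b); exact: map_f.
Qed.

Lemma temporal_walk_exchange u v w x c p q :
  temporal_walk u v p -> temporal_walk w x q ->
  c \in tpath_verts u p -> c \in tpath_verts w q ->
  (exists r, temporal_walk u x r) \/ (exists r, temporal_walk w v r).
Proof.
move=> walk_p walk_q cp cq.
have [p1 [p2 [_ walk_p1 walk_p2 lt_p]]] := temporal_walk_split walk_p cp.
have [q1 [q2 [_ walk_q1 walk_q2 lt_q]]] := temporal_walk_split walk_q cq.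
have [lt_p1q2|not_lt_p1q2] := boolP (allrel ltn (map snd p1) (map snd q2)).
  by left; exists (p1 ++ q2); exact: temporal_walk_cat walk_p1 walk_q2 lt_p1q2.
right; exists (q1 ++ p2); apply: temporal_walk_cat walk_q1 walk_p2 _.
exact: allrel_ltn_exchange lt_p lt_q not_lt_p1q2.
Qed.

End TemporalWalks.

Theorem mainTheorem6 (V : finType) (A : rel V) (tmax : nat)
    (lam : V -> V -> pred nat) (u v w x : V) :
  oriented_tree A ->
  temporal_labelling tmax lam ->
  uniq [:: u; v; w; x] ->
  (exists p, temporal_path A lam u v p) ->
  (exists q, temporal_path A lam w x q) ->
  (forall p q, temporal_path A lam u v p -> temporal_path A lam w x q ->
     exists y, (y \in tpath_verts u p) && (y \in tpath_verts w q)) ->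
  (exists p, temporal_path A lam u x p) \/ (exists q, temporal_path A lam w v q).
Proof.
move=> _ _ _ [p path_p] [q path_q] /(_ p q path_p path_q) [c /andP[cp cq]].
move: path_p path_q; rewrite !temporal_pathE => /andP[_ walk_p] /andP[_ walk_q].
case: (temporal_walk_exchange walk_p walk_q cp cq) => [[r walk_r]|[r walk_r]].
- by left; have [p' path_p' _] := temporal_walk_to_path walk_r; exists p'.
- by right; have [q' path_q' _] := temporal_walk_to_path walk_r; exists q'.
Qed.
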